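(* Let $\beta\in\mathbb{F}G$ and let $\mathcal{C}_{1,\beta}$ be the corresponding $2$-quasi-abelian code over $\mathbb{F}$, with parameters $[2n,k,d_{\min}]$ (length $2n$, dimension $k$, minimum Hamming distance $d_{\min}$). Then there exists $d\in\mathcal{S}G$ with $\pi(d)=\beta$ such that $\pi(\mathfrak{C}_{1,d})=\mathcal{C}_{1,\beta}$ and $\mathfrak{C}_{1,d}$ is a $2$-quasi-abelian code over $\mathcal{S}$ with parameters $[2n,k,d_{\min}]$, i.e. of length $2n$, free over $\mathcal{S}$ of rank $k$, and of minimum Hamming distance $d_{\min}$.
   Context: Let $\mathcal{S}$ be a finite commutative chain ring with maximal ideal $\mathbf{m}$ and residue field $\mathbb{F}=\mathcal{S}/\mathbf{m}=\mathbb{F}_{q^2}$. Let $G$ be a finite abelian group of odd order $n$ with $\gcd(n,q)=1$. The map $\pi:\mathcal{S}G\to\mathbb{F}G$ reduces each coefficient modulo $\mathbf{m}$, applied componentwise on $(\mathcal{S}G)^2$. For $c,d\in\mathcal{S}G$, $\mathfrak{C}_{c,d}=\{(uc,ud):u\in\mathcal{S}G\}$, and for $a,b\in\mathbb{F}G$, $\mathcal{C}_{a,b}=\{(sa,sb):s\in\mathbb{F}G\}$. Elements of $(\mathcal{S}G)^2$ are viewed as words of length $2n$ over $\mathcal{S}$ via their coefficients; the Hamming weight counts nonzero coefficients. *)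

From HB Require Import structures.
From mathcomp Require Import all_boot all_order all_algebra all_fingroup.
Set Implicit Arguments. Unset Strict Implicit. Unset Printing Implicit Defensive.
Import GRing.Theory.
Local Open Scope ring_scope.

Definition is_ideal (R : finComUnitRingType) (I : {set R}) : Prop :=
  0 \in I /\ (forall x y, x \in I -> y \in I -> x + y \in I) /\
  (forall r x, x \in I -> r * x \in I).

Definition chain_ring (R : finComUnitRingType) : Prop :=
  forall I J : {set R}, is_ideal I -> is_ideal J -> I \subset J \/ J \subset I.

Definition maximal_ideal (R : finComUnitRingType) (I : {set R}) : Prop :=
  is_ideal I /\ I != [set: R] /\
  forall J : {set R}, is_ideal J -> I \subset J -> J = I \/ J = [set: R].

Definition gconv (gT : finGroupType) (R : comNzRingType) (u c : {ffun gT -> R})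
  : {ffun gT -> R} :=
  [ffun g => \sum_(h : gT) u h * c ((h^-1 * g)%g)].

Definition gone (gT : finGroupType) (R : comNzRingType) : {ffun gT -> R} :=
  [ffun g => if g == 1%g then 1 else 0].

(* pairs (elements of (R G)^2), viewed as words of length 2|G| *)
Definition word (gT : finGroupType) (R : Type) :=
  ({ffun gT -> R} * {ffun gT -> R})%type.

Definition qa_code (gT : finGroupType) (R : comNzRingType) (c d : {ffun gT -> R})
  (w : word gT R) : Prop :=
  exists u : {ffun gT -> R}, w = (gconv u c, gconv u d).

Definition hdist (gT : finGroupType) (R : eqType) (w v : word gT R) : nat :=
  #|[set g : gT | w.1 g != v.1 g]| + #|[set g : gT | w.2 g != v.2 g]|.

Definition min_dist (gT : finGroupType) (R : eqType) (C : word gT R -> Prop)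
  (dm : nat) : Prop :=
  (exists w v, [/\ C w, C v, w <> v & hdist w v = dm]) /\
  (forall w v, C w -> C v -> w <> v -> (dm <= hdist w v)%N).

Definition lincomb (gT : finGroupType) (R : comNzRingType) (k : nat)
  (c : {ffun 'I_k -> R}) (b : 'I_k -> word gT R) : word gT R :=
  ([ffun g => \sum_(i < k) c i * (b i).1 g], [ffun g => \sum_(i < k) c i * (b i).2 g]).

Definition free_of_rank (gT : finGroupType) (R : comNzRingType)
  (C : word gT R -> Prop) (k : nat) : Prop :=
  exists b : 'I_k -> word gT R, (forall i, C (b i)) /\
    forall w, C w -> exists! c : {ffun 'I_k -> R}, lincomb c b = w.

Definition redw (gT : finGroupType) (S F : Type) (f : S -> F) (w : word gT S) : word gT F :=
  ([ffun g => f (w.1 g)], [ffun g => f (w.2 g)]).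

From HB Require Import structures.
From mathcomp Require Import all_boot all_order all_algebra all_fingroup.
Local Open Scope ring_scope.
Import GRing.Theory.

(** Reduction modulo the maximal ideal is a ring morphism, so it commutes with
   the convolution of the group algebra; hence for any lift [d] of [beta] the
   code [C_{1,d}] reduces onto [C_{1,beta}].  Both codes are free with basis
   the words [(delta_g, delta_g d)], so both have rank [|G|].  For the minimum
   distance, in a chain ring the coefficients of a nonzero [u] generate totally
   ordered principal ideals, so [u = u_{g0} c] with [c_{g0} = 1]; elements of
   nonzero residue are units, so the weight of [(u, u d)] is at least that of
   the nonzero reduced codeword [(pi c, pi c beta)].  The bound is attained by
   [a] times a lift of a minimum weight word over [F], where [a] is a nonzero
   element generating the smallest nonzero ideal, for which [a y != 0] exactly
   when [pi y != 0]. *)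

Section FiniteFunctions.
Context {I : finType} {R : comNzRingType}.
Implicit Types (u v c : {ffun I -> R}).

Definition scalef (a : R) c : {ffun I -> R} := [ffun i => a * c i].

Definition wt u := #|[set i | u i != 0]|.

Lemma wt_eq0 u : (wt u == 0%N) = (u == 0).
Proof.
rewrite cards_eq0; apply/eqP/eqP => [/setP u0 | ->].
  by apply/ffunP => i; have := u0 i; rewrite !inE ffunE => /negbFE/eqP.
by apply/setP => i; rewrite !inE ffunE eqxx.
Qed.

Lemma card_neq_wt u v : #|[set i | u i != v i]| = wt (u - v).
Proof. by apply: eq_card => i; rewrite !inE !ffunE subr_eq0. Qed.

Lemma sum_mul_delta (c : I -> R) (i0 : I) :
  \sum_i c i * (if i == i0 then 1 else 0) = c i0.
Proof. by rewrite (bigD1 i0) //= eqxx mulr1 big1 ?addr0 // => i /negbTE ->; rewrite mulr0. Qed.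

End FiniteFunctions.

Definition map_ffun {I : finType} {A B : Type} (f : A -> B) (u : {ffun I -> A})
  : {ffun I -> B} := [ffun i => f (u i)].

Lemma map_ffunK {I : finType} {A B : Type} {f : A -> B} {g : B -> A} :
  cancel g f -> cancel (map_ffun (I := I) g) (map_ffun f).
Proof. by move=> gK u; apply/ffunP => i; rewrite !ffunE gK. Qed.

Section GroupAlgebra.
Context {gT : finGroupType} {R : comNzRingType}.
Implicit Types (u v c d : {ffun gT -> R}).

Lemma gconv1 u : gconv u (gone gT R) = u.
Proof.
apply/ffunP => g; rewrite ffunE -[RHS](sum_mul_delta u g).
by apply: eq_bigr => h _; rewrite ffunE -eq_mulVg1.
Qed.

Lemma gconvBl u v c : gconv (u - v) c = gconv u c - gconv v c.
Proof. by apply/ffunP => g; rewrite !ffunE -sumrB; apply: eq_bigr => h _; rewrite !ffunE mulrBl. Qed.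

Lemma gconvZl a u c : gconv (scalef a u) c = scalef a (gconv u c).
Proof. by apply/ffunP => g; rewrite !ffunE mulr_sumr; apply: eq_bigr => h _; rewrite ffunE mulrA. Qed.

Lemma gconv_sum (J : finType) (x : J -> R) (us : J -> {ffun gT -> R}) c :
  gconv [ffun h => \sum_j x j * us j h] c = [ffun g => \sum_j x j * gconv (us j) c g].
Proof.
apply/ffunP => g; rewrite !ffunE.
under [RHS]eq_bigr do rewrite ffunE mulr_sumr.
rewrite [RHS]exchange_big; apply: eq_bigr => h _.
by rewrite ffunE mulr_suml; apply: eq_bigr => j _; rewrite mulrA.
Qed.

Lemma lincomb_codewords k (x : {ffun 'I_k -> R}) (us : 'I_k -> {ffun gT -> R}) c d :
  lincomb x (fun i => (gconv (us i) c, gconv (us i) d)) =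
  (gconv [ffun h => \sum_i x i * us i h] c, gconv [ffun h => \sum_i x i * us i h] d).
Proof. by rewrite !gconv_sum. Qed.

Lemma qa_code_lincomb {c d} {k} {b : 'I_k -> word gT R} :
  (forall i, qa_code c d (b i)) -> forall x, qa_code c d (lincomb x b).
Proof.
move=> /fin_all_exists[us Hus] x; exists [ffun h => \sum_i x i * us i h].
rewrite !gconv_sum; congr pair; apply/ffunP => g; rewrite !ffunE;
  by apply: eq_bigr => i _; rewrite Hus.
Qed.

Lemma qa_code1P d w : qa_code (gone gT R) d w <-> w = (w.1, gconv w.1 d).
Proof. by split => [[u ->] | ->]; [rewrite /= gconv1 | exists w.1; rewrite gconv1]. Qed.

Definition qa_wt d u := (wt u + wt (gconv u d))%N.

Lemma hdist_qa1 d u v : hdist (u, gconv u d) (v, gconv v d) = qa_wt d (u - v).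
Proof. by rewrite /hdist /qa_wt /= !card_neq_wt gconvBl. Qed.

Lemma min_dist_qa1P d dm :
  min_dist (qa_code (gone gT R) d) dm <->
  (exists2 u, u != 0 & qa_wt d u = dm) /\ (forall u, u != 0 -> (dm <= qa_wt d u)%N).
Proof.
have neq_words u v : u != v -> (u, gconv u d) <> (v, gconv v d).
  by move=> /eqP uv [].
split => [[[w [v [/qa_code1P Ew /qa_code1P Ev wv <-]]] Hmin] | [[u u0 <-] Hmin]].
  split.
    exists (w.1 - v.1); last by rewrite -hdist_qa1 -Ew -Ev.
    by rewrite subr_eq0; apply/eqP => E; apply: wv; rewrite Ew Ev E.
  move=> u u0; rewrite -[u]subr0 -hdist_qa1.
  by apply: Hmin; [exact/qa_code1P | exact/qa_code1P | exact: neq_words].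
split.
  exists (u, gconv u d), (0, gconv 0 d); split; try exact/qa_code1P.
    exact: neq_words.
  by rewrite hdist_qa1 subr0.
move=> w v /qa_code1P -> /qa_code1P -> wv; rewrite hdist_qa1; apply: Hmin.
by rewrite subr_eq0; apply/eqP => E; apply: wv; rewrite E.
Qed.

Lemma qa_code1_free d : free_of_rank (qa_code (gone gT R) d) #|gT|.
Proof.
pose delta (i : 'I_#|gT|) : {ffun gT -> R} := [ffun h => if h == enum_val i then 1 else 0].
have sum_delta (x : {ffun 'I_#|gT| -> R}) :
    [ffun h => \sum_i x i * delta i h] = [ffun h => x (enum_rank h)].
  apply/ffunP => h; rewrite !ffunE -sum_mul_delta; apply: eq_bigr => i _.
  by rewrite ffunE -{1}(enum_rankK h) (inj_eq enum_val_inj) eq_sym.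
exists (fun i => (gconv (delta i) (gone gT R), gconv (delta i) d)).
split=> [i | w /qa_code1P ->]; first by exists (delta i).
exists [ffun i => w.1 (enum_val i)]; split.
  rewrite lincomb_codewords sum_delta gconv1.
  suff -> : [ffun h => [ffun i => w.1 (enum_val i)] (enum_rank h)] = w.1 by [].
  by apply/ffunP => h; rewrite !ffunE enum_rankK.
move=> x; rewrite lincomb_codewords sum_delta gconv1 => -[E _].
by apply/ffunP => i; rewrite ffunE -E ffunE enum_valK.
Qed.

End GroupAlgebra.

(* Over a finite ring the rank is determined by cardinality: a basis of size
   [k] puts [C_{1,d}], which is in bijection with [R G], in bijection with [R^k]. *)
Lemma qa_code1_rank {gT : finGroupType} {R : finComNzRingType} {d : {ffun gT -> R}} {k} :
  free_of_rank (qa_code (gone gT R) d) k -> k = #|gT|.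
Proof.
case=> b [Cb coordP].
pose f x := (lincomb x b).1.
have lincombE x : lincomb x b = (f x, gconv (f x) d).
  exact/qa_code1P/qa_code_lincomb.
have f_inj : injective f.
  move=> x y fxy; have [z [_ zuniq]] := coordP _ (qa_code_lincomb Cb x).
  by rewrite -(zuniq x) // (zuniq y) // lincombE -fxy -lincombE.
have [coord coordK] : exists coord, cancel coord f.
  have /fin_all_exists[coord Hc] s : exists x, lincomb x b = (s, gconv s d).
    have /coordP[x [Ex _]] : qa_code (gone gT R) d (s, gconv s d) by exact/qa_code1P.
    by exists x.
  by exists coord => s; rewrite /f Hc.
have : #|{ffun 'I_k -> R}| = #|{ffun gT -> R}|.
  by apply/eqP; rewrite eqn_leq (leq_card _ f_inj) (leq_card _ (can_inj coordK)).
by rewrite !card_ffun card_ord => /eqP; rewrite eqn_exp2l ?card_finNzRing_gt1 // => /eqP.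
Qed.

Section Reduction.
Context {gT : finGroupType} {R1 R2 : comNzRingType} (f : {rmorphism R1 -> R2}).
Implicit Types (u c d : {ffun gT -> R1}).

Lemma map_gconv u c : map_ffun f (gconv u c) = gconv (map_ffun f u) (map_ffun f c).
Proof. by apply/ffunP => g; rewrite !ffunE rmorph_sum; apply: eq_bigr => h _; rewrite rmorphM !ffunE. Qed.

Lemma map_gone : map_ffun f (gone gT R1) = gone gT R2.
Proof. by apply/ffunP => g; rewrite !ffunE; case: (g == 1%g); rewrite ?rmorph1 ?rmorph0. Qed.

Lemma qa_code1_map (lift : R2 -> R1) : cancel lift f -> forall d w,
  qa_code (gone gT R2) (map_ffun f d) w <->
  exists v, qa_code (gone gT R1) d v /\ redw f v = w.
Proof.
move=> liftK d w; split => [[s ->] | [_ [[u ->] <-]]].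
  exists (gconv (map_ffun lift s) (gone gT R1), gconv (map_ffun lift s) d).
  split; first by exists (map_ffun lift s).
  by rewrite /redw -!/(map_ffun f _) !map_gconv map_gone (map_ffunK liftK).
by exists (map_ffun f u); rewrite /redw -!/(map_ffun f _) !map_gconv map_gone.
Qed.

End Reduction.

Section ChainRing.
Context {S : finComUnitRingType} (hchain : chain_ring S).

Definition pid (y : S) : {set S} := [set z | [exists t, z == t * y]].

Lemma pid_ideal y : is_ideal (pid y).
Proof.
split; [|split].
- by rewrite inE; apply/existsP; exists 0; rewrite mul0r.
- move=> a b; rewrite !inE => /existsP[s /eqP->] /existsP[t /eqP->].
  by apply/existsP; exists (s + t); rewrite mulrDl.
- move=> r a; rewrite !inE => /existsP[s /eqP->].
  by apply/existsP; exists (r * s); rewrite mulrA.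
Qed.

Lemma mem_pid y : y \in pid y.
Proof. by rewrite inE; apply/existsP; exists 1; rewrite mul1r. Qed.

(* A generator [u i0] of the largest of the (totally ordered) principal ideals
   [pid (u i)] divides all coefficients of [u]. *)
Lemma chain_ring_ffun_factor (I : finType) (u : {ffun I -> S}) : u != 0 ->
  exists i0 (c : {ffun I -> S}), [/\ u i0 != 0, c i0 = 1 & u = scalef (u i0) c].
Proof.
move=> u0; have /set0Pn[i1] : [set i | u i != 0] != set0.
  by rewrite -cards_eq0 -/(wt u) wt_eq0.
rewrite inE => ui1.
case: (@arg_maxnP _ i1 (fun i => u i != 0) (fun i => #|pid (u i)|) ui1) => i0 ui0 i0_max.
have u_pid i : u i \in pid (u i0).
  have [-> | ui] := eqVneq (u i) 0.
    by rewrite inE; apply/existsP; exists 0; rewrite mul0r.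
  case: (hchain _ _ (pid_ideal (u i)) (pid_ideal (u i0))) => [/subsetP -> // | sub0].
    exact: mem_pid.
  suff -> : pid (u i0) = pid (u i) by exact: mem_pid.
  by apply/eqP; rewrite eqEcard sub0; exact: i0_max.
have /fin_all_exists[t Ht] i : exists t, u i = u i0 * t.
  by move: (u_pid i); rewrite inE => /existsP[t /eqP ->]; exists t; rewrite mulrC.
exists i0, [ffun i => if i == i0 then 1 else t i]; split; rewrite ?ffunE ?eqxx //.
apply/ffunP => i; rewrite !ffunE; case: eqP => [-> | _]; by rewrite ?mulr1.
Qed.

Context {F : comNzRingType} {red : {rmorphism S -> F}}.
Hypothesis hmax : maximal_ideal [set x : S | red x == 0].

(* A chain ring is local: [pid y] is not inside the maximal ideal, so it contains it
   and, by maximality, is the whole ring. *)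
Lemma red_neq0_unit y : red y != 0 -> y \is a GRing.unit.
Proof.
move=> ry; have [m_ideal [_ m_max]] := hmax.
case: (hchain _ _ (pid_ideal y) m_ideal) => [/subsetP/(_ y (mem_pid y)) | m_sub].
  by rewrite inE (negbTE ry).
case: (m_max _ (pid_ideal y) m_sub) => [ym | /setP/(_ 1)].
  by have := mem_pid y; rewrite ym inE (negbTE ry).
rewrite !inE => /existsP[t /eqP t_inv]; apply/unitrP; exists t.
by rewrite [y * t]mulrC -t_inv.
Qed.

(* [a] generates a minimal nonzero principal ideal: if [red y = 0] and [a y != 0]
   then [pid (a y) = pid a], so [a = t a y] and [a (1 - t y) = 0] with [1 - t y] a unit. *)
Lemma socle_exists : exists2 a : S, a != 0 & forall y, (a * y != 0) = (red y != 0).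
Proof.
have [a a0 a_min] := @arg_minnP _ 1 (fun x : S => x != 0) (fun x => #|pid x|) (oner_neq0 S).
exists a => // y; have [ry | ry] := eqVneq (red y) 0; last first.
  by rewrite mulIr_eq0 ?a0 //; apply/mulIr/red_neq0_unit.
apply/negbTE; rewrite negbK; apply: contraT => ay.
have sub : pid (a * y) \subset pid a.
  apply/subsetP => z; rewrite !inE => /existsP[t /eqP->].
  by apply/existsP; exists (t * y); rewrite mulrCA mulrC.
have : a \in pid (a * y) by rewrite (eqP (_ : pid (a * y) == pid a)) ?mem_pid // eqEcard sub a_min.
rewrite inE => /existsP[t /eqP a_ty].
have u1 : (1 - t * y) \is a GRing.unit.
  by apply: red_neq0_unit; rewrite rmorphB rmorph1 rmorphM ry mulr0 subr0 oner_neq0.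
have : a * (1 - t * y) == 0 by rewrite mulrBr mulr1 mulrCA -a_ty subrr.
by rewrite (mulIr_eq0 _ (mulIr u1)) (negbTE a0).
Qed.

Section Weights.
Context {I : finType}.
Implicit Types (u c : {ffun I -> S}).

Lemma wt_red_le_scale (x0 : S) c : x0 != 0 -> (wt (map_ffun red c) <= wt (scalef x0 c))%N.
Proof.
move=> x00; apply/subset_leq_card/subsetP => i; rewrite !inE !ffunE => /red_neq0_unit ci.
by rewrite (mulIr_eq0 _ (mulIr ci)).
Qed.

Lemma wt_scale_socle {a : S} : (forall y, (a * y != 0) = (red y != 0)) ->
  forall c, wt (scalef a c) = wt (map_ffun red c).
Proof. by move=> a_socle c; apply: eq_card => i; rewrite !inE !ffunE a_socle. Qed.

End Weights.

Lemma min_dist_qa1_lift {gT : finGroupType} {lift : F -> S} (liftK : cancel lift red)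
  (d : {ffun gT -> S}) dm :
  min_dist (qa_code (gone gT F) (map_ffun red d)) dm -> min_dist (qa_code (gone gT S) d) dm.
Proof.
move=> /min_dist_qa1P[[s s0 <-] s_min]; apply/min_dist_qa1P.
have [a a0 a_socle] := socle_exists.
have qa_wt_socle c : qa_wt d (scalef a c) = qa_wt (map_ffun red d) (map_ffun red c).
  by rewrite /qa_wt gconvZl !(wt_scale_socle a_socle) map_gconv.
split.
  exists (scalef a (map_ffun lift s)); last by rewrite qa_wt_socle (map_ffunK liftK).
  by rewrite -wt_eq0 (wt_scale_socle a_socle) (map_ffunK liftK) wt_eq0.
move=> u /chain_ring_ffun_factor[g0 [c [ug0 cg0 ->]]].
apply: leq_trans (s_min (map_ffun red c) _) _.
  by apply/eqP => /ffunP/(_ g0); rewrite !ffunE cg0 rmorph1 => /eqP; rewrite oner_eq0.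
by rewrite /qa_wt gconvZl -map_gconv leq_add ?wt_red_le_scale.
Qed.

End ChainRing.

Theorem theorem4p3
  (S : finComUnitRingType) (F : finFieldType) (q : nat)
  (red : {rmorphism S -> F})
  (gT : finGroupType)
  (hchain : chain_ring S)
  (hred_surj : forall y : F, exists x : S, red x = y)
  (hred_ker : maximal_ideal [set x : S | red x == 0])
  (hF : #|F| = (q ^ 2)%N)
  (hab : abelian [set: gT])
  (hodd : odd #|gT|)
  (hcop : coprime #|gT| q)
  (beta : {ffun gT -> F}) (k dm : nat)
  (hk : free_of_rank (qa_code (gone gT F) beta) k)
  (hdm : min_dist (qa_code (gone gT F) beta) dm) :
  exists d : {ffun gT -> S},
    [/\ [ffun g => red (d g)] = beta,
        (forall w, qa_code (gone gT F) beta w <->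
                   exists v, qa_code (gone gT S) d v /\ redw red v = w),
        free_of_rank (qa_code (gone gT S) d) k
      & min_dist (qa_code (gone gT S) d) dm].
Proof.
have [lift liftK] : exists lift : F -> S, cancel lift red.
  by have [lift Hlift] := fin_all_exists hred_surj; exists lift.
exists (map_ffun lift beta).
have red_d : map_ffun red (map_ffun lift beta) = beta by rewrite (map_ffunK liftK).
split=> //.
- by move=> w; rewrite -{1}red_d; exact: qa_code1_map liftK _ w.
- by rewrite (qa_code1_rank hk); exact: qa_code1_free.
- by apply: (min_dist_qa1_lift hchain hred_ker liftK); rewrite red_d.
Qed.
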